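(* For $n\ge 5$, any generating set of the semigroup $\mathbf{W}^{\ge 6}_{\mathrm{bf}}(n)$ has at least $(n-2)^{n-3}+(n-3)2^{n-3}-1$ elements.
   Context: Let $Q=\{0,\dots,n-1\}$ and $Q_M=\{1,\dots,n-3\}$. Transformations of $Q$ act on the right, $q(st)=(qs)t$. Let $\mathbf{B}_{\mathrm{bf}}(n)$ be the set of all transformations $t$ of $Q$ with $0\notin Qt$, $(n-1)t=n-1$, $(n-2)t=n-1$, and for all $j\ge1$, either $0t^j=n-1$ or $0t^j\ne qt^j$ for all $0<q<n-1$. Then $\mathbf{W}^{\ge 6}_{\mathrm{bf}}(n)=\{t\in\mathbf{B}_{\mathrm{bf}}(n)\mid 0t\in\{n-2,n-1\}$, or $0t\in Q_M$ and $qt\in\{n-2,n-1\}$ for all $q\in Q_M\}$, a semigroup under composition. *)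

From mathcomp Require Import all_boot.
Set Implicit Arguments. Unset Strict Implicit. Unset Printing Implicit Defensive.

(* Transformations of Q = {0,...,n-1} = 'I_n, acting on the right:
   q(st) = (qs)t, i.e. st is "first s, then t". *)
Definition transf (n : nat) := {ffun 'I_n -> 'I_n}.

Definition tmul (n : nat) (s t : transf n) : transf n := [ffun q => t (s q)].

Definition tpow (n : nat) (t : transf n) (j : nat) (q : 'I_n) : 'I_n := iter j t q.

Definition in_Bbf (n : nat) (t : transf n) : Prop :=
  (forall q : 'I_n, val (t q) != 0) /\
  (forall q : 'I_n, val q = n.-1 -> val (t q) = n.-1) /\
  (forall q : 'I_n, val q = n.-2 -> val (t q) = n.-1) /\
  (forall j : nat, 1 <= j -> forall q0 : 'I_n, val q0 = 0 ->
     val (tpow t j q0) = n.-1 \/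
     (forall q : 'I_n, 0 < val q < n.-1 -> tpow t j q0 != tpow t j q)).

Definition in_QM (n : nat) (q : 'I_n) : bool := (1 <= val q) && (val q <= n - 3).

Definition in_W6bf (n : nat) (t : transf n) : Prop :=
  in_Bbf t /\
  (forall q0 : 'I_n, val q0 = 0 ->
     (val (t q0) = n.-2 \/ val (t q0) = n.-1) \/
     (in_QM (t q0) /\
      forall q : 'I_n, in_QM q -> val (t q) = n.-2 \/ val (t q) = n.-1)).

Inductive gen_sg (n : nat) (G : {set transf n}) : transf n -> Prop :=
  | gen_base t : t \in G -> gen_sg G t
  | gen_mul s t : gen_sg G s -> gen_sg G t -> gen_sg G (tmul s t).

Definition generates_W6bf (n : nat) (G : {set transf n}) : Prop :=
  (forall t, t \in G -> in_W6bf t) /\ (forall t, in_W6bf t -> gen_sg G t).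

(* Membership in W^{>=6}_bf(n) can be stated without powers: t never hits 0,
   sends n-2 and n-1 to n-1, sends Q_M into {n-2, n-1} when 0t lies in Q_M, and
   avoids n-2 on Q_M when 0t = n-2.  From this, a product st with 0st <> n-1
   sends all of Q_M to n-1, so every element with 0t <> n-1 that does not send
   Q_M to n-1 is indecomposable and belongs to every generating set: there are
   (n-2)^(n-3) - 1 of them with 0t = n-2 and (n-3)(2^(n-3) - 1) with 0t in Q_M.
   Moreover, if st maps Q_M onto {1, ..., n-2} minus a point x of Q_M, then so
   does t; hence for each of the n-3 points x some generator has this property,
   and no map has it for two different points, since |Q_M| = n-3. *)

From mathcomp Require Import all_boot zify.

Set Implicit Arguments. Unset Strict Implicit. Unset Printing Implicit Defensive.

Lemma in_setC3 (T : finType) (y a b c : T) :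
  (y \in ~: [set a; b; c]) = [&& y != a, y != b & y != c].
Proof. by rewrite !inE !negb_or andbA. Qed.

Lemma ffun_neq_const (I : finType) (T : eqType) (f : {ffun I -> T}) (a : T) :
  f != [ffun=> a] -> exists i, f i != a.
Proof.
move=> nf; apply/existsP; apply: contraNT nf => /existsPn fa.
by apply/eqP/ffunP=> i; rewrite ffunE; apply/eqP/negPn; exact: fa.
Qed.

Section W6bf.

Variable m : nat.
Local Notation n := m.+4.+1.

Definition start : 'I_n := ord0.
Definition presink : 'I_n := inord m.+3.
Definition sink : 'I_n := ord_max.

Lemma val_presink : presink = m.+3 :> nat.
Proof. exact: inordK. Qed.

Lemma in_QME (q : 'I_n) : in_QM q = (0 < q <= m.+2).
Proof. by []. Qed.

Lemma QM_startF : in_QM start = false.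
Proof. by []. Qed.

Lemma QM_presinkF : in_QM presink = false.
Proof. by rewrite in_QME val_presink; lia. Qed.

Lemma QM_sinkF : in_QM sink = false.
Proof. by rewrite in_QME /=; lia. Qed.

Lemma presink_neq_sink : presink != sink.
Proof. by rewrite -val_eqE /= val_presink /=; lia. Qed.

Lemma presink_neq_start : presink != start.
Proof. by rewrite -val_eqE /= val_presink. Qed.

Lemma sink_neq_start : sink != start.
Proof. by []. Qed.

Lemma QM_neq (q p : 'I_n) : in_QM q -> in_QM p = false -> q != p.
Proof. by move=> hq; apply: contraFneq => <-. Qed.

Lemma point_cases (q : 'I_n) : [\/ q = start, in_QM q, q = presink | q = sink].
Proof.
rewrite in_QME; have [|hq] := boolP (0 < val q <= m.+2); first by constructor 2.
have : val q = 0 \/ val q = m.+3 \/ val q = m.+4 by move: hq (ltn_ord q) => /=; lia.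
case=> [hv|[hv|hv]]; [constructor 1|constructor 3|constructor 4];
  by apply: ord_inj; rewrite hv ?val_presink.
Qed.

(* The clause on powers of t in in_W6bf follows, because 0t^j reaches n-1 after
   at most three steps. *)
Record W6bf_spec (t : transf n) : Prop := W6bfSpec {
  W6bf_neq_start : forall q, t q != start;
  W6bf_sink : t sink = sink;
  W6bf_presink : t presink = sink;
  W6bf_QM : in_QM (t start) -> forall q, in_QM q -> t q = presink \/ t q = sink;
  W6bf_presink_start : t start = presink -> forall q, in_QM q -> t q != presink
}.

Lemma W6bf_to_sink t q : W6bf_spec t -> q = presink \/ q = sink -> t q = sink.
Proof. by move=> ht [->|->]; [exact: W6bf_presink|exact: W6bf_sink]. Qed.

Lemma inner_point_cases (q : 'I_n) : 0 < val q < n.-1 -> in_QM q \/ q = presink.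
Proof.
by case: (point_cases q) => [->|hq|->|->] /=; [lia|left|right|lia].
Qed.

Lemma in_W6bf_spec t : in_W6bf t -> W6bf_spec t.
Proof.
move=> [[neq0 [fix_sink [to_sink pow]]] shape]; split.
- by move=> q; rewrite -val_eqE.
- by apply: ord_inj; exact: fix_sink.
- by apply: ord_inj; apply: to_sink; rewrite /= val_presink.
- move=> hQM q hq; have [[]|[_ /(_ q hq)]] := shape start erefl.
  + by move=> /= e; move: hQM; rewrite in_QME e; lia.
  + by move=> /= e; move: hQM; rewrite in_QME e; lia.
  + by case=> /= hv; [left|right]; apply: ord_inj; rewrite hv ?val_presink.
- move=> h0 q hq; case: (pow 1 isT start erefl) => [|/(_ q)].
    by rewrite /tpow /= h0 val_presink; lia.
  by rewrite /tpow /= h0 eq_sym; apply; move: hq; rewrite in_QME /=; lia.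
Qed.

Lemma W6bf_spec_tpow t j : W6bf_spec t -> 0 < j ->
  tpow t j start = sink \/ forall q, 0 < val q < n.-1 -> tpow t j start != tpow t j q.
Proof.
move=> ht j_gt0; rewrite /tpow.
have iter_sink k : iter k t sink = sink by apply: iter_fix; exact: W6bf_sink.
have sinkE q : q = presink \/ q = sink -> t q = sink by exact: W6bf_to_sink.
case: (point_cases (t start)) => [/eqP|hs|hs|hs]; first by rewrite (negbTE (W6bf_neq_start ht _)).
- have hss := W6bf_QM ht hs hs.
  case: j j_gt0 => [|[_|[_|j _]]] //.
  + rewrite /=; right=> q /inner_point_cases [hq|->]; last first.
      by rewrite (W6bf_presink ht); apply: QM_neq hs QM_sinkF.
    by case: (W6bf_QM ht hs hq) => ->; apply: QM_neq hs _; rewrite ?QM_presinkF ?QM_sinkF.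
  + rewrite /=; case: hss => ->; [right|by left].
    move=> q /inner_point_cases hq; rewrite (sinkE (t q)) ?presink_neq_sink //.
    by case: hq => [/(W6bf_QM ht hs)|->]; [|right; exact: W6bf_presink].
  + by left; rewrite !iterSr (sinkE _ hss) iter_sink.
- case: j j_gt0 => [|[_|j _]] //.
    right=> q /inner_point_cases [hq|->] /=; rewrite hs.
      by rewrite eq_sym; apply: W6bf_presink_start.
    by rewrite (W6bf_presink ht) presink_neq_sink.
  by left; rewrite !iterSr hs (W6bf_presink ht) iter_sink.
- by case: j j_gt0 => [|j _] //; left; rewrite iterSr hs iter_sink.
Qed.

Lemma in_W6bfP t : in_W6bf t <-> W6bf_spec t.
Proof.
split=> [|ht]; first exact: in_W6bf_spec.
split; [split; [|split; [|split]] |].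
- by move=> q; rewrite -[0]/(val start) val_eqE W6bf_neq_start.
- move=> q hq; have -> : q = sink by apply: ord_inj.
  by rewrite (W6bf_sink ht).
- move=> q hq; have -> : q = presink by apply: ord_inj; rewrite val_presink.
  by rewrite (W6bf_presink ht).
- move=> j j_gt0 q0 /= h0; have -> : q0 = start by apply: ord_inj.
  by case: (W6bf_spec_tpow ht j_gt0) => [->|]; [left|right].
- move=> q0 /= h0; have -> : q0 = start by apply: ord_inj.
  case: (point_cases (t start)) => [/eqP|hs|->|->].
  + by rewrite (negbTE (W6bf_neq_start ht _)).
  + right; split=> // q /(W6bf_QM ht hs) [->|->]; [left|right] => //.
    exact: val_presink.
  + by left; left; exact: val_presink.
  + by left; right.
Qed.

Lemma tmulE (s u : transf n) q : tmul s u q = u (s q).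
Proof. by rewrite ffunE. Qed.

Lemma tmul_QM_sink (s u : transf n) : W6bf_spec s -> W6bf_spec u ->
  tmul s u start != sink -> forall q, in_QM q -> tmul s u q = sink.
Proof.
move=> hs hu; rewrite !tmulE => h0 q hq; rewrite tmulE.
case: (point_cases (s start)) => [/eqP|hs0|e|e]; first by rewrite (negbTE (W6bf_neq_start hs _)).
- exact/(W6bf_to_sink hu)/(W6bf_QM hs hs0).
- by rewrite e (W6bf_presink hu) eqxx in h0.
- by rewrite e (W6bf_sink hu) eqxx in h0.
Qed.

Lemma W6bf_spec_mul (s u : transf n) :
  W6bf_spec s -> W6bf_spec u -> W6bf_spec (tmul s u).
Proof.
move=> hs hu; have QM_sink_mul := tmul_QM_sink hs hu.
split=> [q||||].
- by rewrite tmulE W6bf_neq_start.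
- by rewrite tmulE !W6bf_sink.
- by rewrite tmulE (W6bf_presink hs) (W6bf_sink hu).
- by move=> h0 q hq; right; apply: QM_sink_mul hq; apply: QM_neq h0 QM_sinkF.
- move=> h0 q hq; rewrite QM_sink_mul ?h0 ?presink_neq_sink //.
  by rewrite eq_sym presink_neq_sink.
Qed.

Definition QM_set : {set 'I_n} := [set q | in_QM q].

Definition covers_but (x : 'I_n) (t : transf n) : bool :=
  (t start == sink) && (~: [set start; sink; x] \subset t @: QM_set).

Lemma covers_but_inj x y (t : transf n) : covers_but x t -> covers_but y t -> x = y.
Proof.
move=> /andP[_ cov_x] /andP[_ cov_y]; apply/eqP; apply: contraT => nxy.
have : presink |: QM_set \subset t @: QM_set.
  apply/subsetP=> z; rewrite !inE => hz.
  have [zs zk] : z != start /\ z != sink.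
    case/orP: hz => [/eqP->|hz].
      by rewrite presink_neq_sink -val_eqE /= val_presink.
    by split; apply: QM_neq hz _; rewrite ?QM_startF ?QM_sinkF.
  have : (z != x) || (z != y).
    by apply: contraR nxy; rewrite negb_or !negbK => /andP[/eqP-> /eqP->].
  case/orP=> nz; [apply: (subsetP cov_x)|apply: (subsetP cov_y)];
    by rewrite in_setC3 zs zk nz.
by move/subset_leq_card; rewrite cardsU1 inE QM_presinkF add1n ltnNge leq_imset_card.
Qed.

Definition mid (i : 'I_m.+2) : 'I_n := inord i.+1.
Definition mid_index (q : 'I_n) : 'I_m.+2 := inord (val q).-1.

Lemma val_mid i : mid i = i.+1 :> nat.
Proof. by rewrite /= inordK //; have := ltn_ord i; lia. Qed.

Lemma QM_mid i : in_QM (mid i).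
Proof. by rewrite in_QME val_mid /=; have := ltn_ord i; lia. Qed.

Lemma mid_inj : injective mid.
Proof. by move=> i j /(congr1 (@nat_of_ord _)); rewrite !val_mid => -[] /ord_inj. Qed.

Lemma mid_indexK : cancel mid mid_index.
Proof. by move=> i; apply: ord_inj; rewrite /mid_index /= val_mid inordK ?ltn_ord. Qed.

Lemma exists_QM_neq (x : 'I_n) : exists2 y, in_QM y & y != x.
Proof.
have two : (inord 1 : 'I_m.+2) != ord0 by rewrite -val_eqE /= inordK.
case: (eqVneq x (mid ord0)) => [->|nx]; last by exists (mid ord0); rewrite ?QM_mid // eq_sym.
by exists (mid (inord 1)); rewrite ?QM_mid // (inj_eq mid_inj).
Qed.

Lemma covers_but_mulr x (s u : transf n) : in_QM x -> W6bf_spec s -> W6bf_spec u ->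
  covers_but x (tmul s u) -> covers_but x u.
Proof.
move=> hx hs hu /andP[_ cov_su].
have cov_u : ~: [set start; sink; x] \subset u @: QM_set.
  apply/subsetP=> y hy; have /imsetP[q _ yE] := subsetP cov_su y hy.
  move: hy; rewrite yE tmulE in_setC3.
  case: (point_cases (s q)) => [/eqP|hq|->|->]; first by rewrite (negbTE (W6bf_neq_start hs _)).
  - by move=> _; apply: imset_f; rewrite inE.
  - by rewrite (W6bf_presink hu) eqxx andbF.
  - by rewrite (W6bf_sink hu) eqxx andbF.
apply/andP; split=> //.
case: (point_cases (u start)) => [/eqP|h0|h0|->] //; first by rewrite (negbTE (W6bf_neq_start hu _)).
- have [y hy yx] := exists_QM_neq x.
  have /imsetP[q hq yE] : y \in u @: QM_set.
    by apply: (subsetP cov_u); rewrite in_setC3 yx !QM_neq ?QM_startF ?QM_sinkF.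
  rewrite inE in hq.
  by case: (W6bf_QM hu h0 hq) => e; move: hy; rewrite yE e ?QM_presinkF ?QM_sinkF.
- have /imsetP[q hq e] : presink \in u @: QM_set.
    apply: (subsetP cov_u).
    by rewrite in_setC3 presink_neq_start presink_neq_sink eq_sym QM_neq ?QM_presinkF.
  by rewrite inE in hq; move: (W6bf_presink_start hu h0 hq); rewrite -e eqxx.
Qed.

Definition mk_tr (z : 'I_n) (f : 'I_n -> 'I_n) : transf n :=
  [ffun q => if q == start then z else if in_QM q then f q else sink].

Lemma mk_tr_start z f : mk_tr z f start = z.
Proof. by rewrite ffunE eqxx. Qed.

Lemma mk_tr_QM z f q : in_QM q -> mk_tr z f q = f q.
Proof. by move=> hq; rewrite ffunE hq (negbTE (QM_neq hq QM_startF)). Qed.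

Lemma mk_tr_spec z f : z != start -> (forall q, in_QM q -> f q != start) ->
  (in_QM z -> forall q, in_QM q -> f q = presink \/ f q = sink) ->
  (z = presink -> forall q, in_QM q -> f q != presink) -> W6bf_spec (mk_tr z f).
Proof.
move=> z0 f0 fQM fpre.
have out q : in_QM q = false -> q != start -> mk_tr z f q = sink.
  by move=> hq nq; rewrite ffunE (negbTE nq) hq.
have [out_presink out_sink] := (out _ QM_presinkF presink_neq_start, out _ QM_sinkF sink_neq_start).
split=> [q||||]; rewrite ?mk_tr_start ?out_presink ?out_sink //.
- case: (point_cases q) => [->|hq|->|->]; rewrite ?mk_tr_start ?out_presink ?out_sink //.
  by rewrite mk_tr_QM //; exact: f0.
- by move=> hz q hq; rewrite mk_tr_QM //; exact: fQM.
- by move=> hz q hq; rewrite mk_tr_QM //; exact: fpre.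
Qed.

Definition tr_presink (c : {ffun 'I_m.+2 -> option 'I_m.+2}) : transf n :=
  mk_tr presink (fun q => oapp mid sink (c (mid_index q))).

Definition tr_mid (p : 'I_m.+2) (b : {ffun 'I_m.+2 -> bool}) : transf n :=
  mk_tr (mid p) (fun q => if b (mid_index q) then presink else sink).

Definition tr_cover (x : 'I_n) : transf n :=
  mk_tr sink (fun q => if q == x then presink else q).

Lemma tr_presink_mid c i : tr_presink c (mid i) = oapp mid sink (c i).
Proof. by rewrite mk_tr_QM ?QM_mid // mid_indexK. Qed.

Lemma tr_mid_mid p b i : tr_mid p b (mid i) = if b i then presink else sink.
Proof. by rewrite mk_tr_QM ?QM_mid // mid_indexK. Qed.

Lemma oapp_mid_inj : injective (oapp mid sink).
Proof.
have mid_sink i : mid i != sink by apply: QM_neq (QM_mid i) QM_sinkF.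
case=> [i|] [j|] //=; first by move/mid_inj->.
  by move/eqP; rewrite (negbTE (mid_sink i)).
by move/esym/eqP; rewrite (negbTE (mid_sink j)).
Qed.

Lemma tr_presink_spec c : W6bf_spec (tr_presink c).
Proof.
apply: mk_tr_spec => [|q _||_ q _]; rewrite ?presink_neq_start ?QM_presinkF //.
  by case: (c _) => [k|] /=; [apply: QM_neq (QM_mid k) QM_startF|exact: sink_neq_start].
by case: (c _) => [k|] /=; [apply: QM_neq (QM_mid k) QM_presinkF|rewrite eq_sym presink_neq_sink].
Qed.

Lemma tr_mid_spec p b : W6bf_spec (tr_mid p b).
Proof.
apply: mk_tr_spec => [||_ q _|e].
- exact: QM_neq (QM_mid p) QM_startF.
- by move=> q _; case: (b _); [exact: presink_neq_start|exact: sink_neq_start].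
- by case: (b _); [left|right].
- by have := QM_mid p; rewrite e QM_presinkF.
Qed.

Lemma tr_cover_spec x : W6bf_spec (tr_cover x).
Proof.
apply: mk_tr_spec => [|q hq||]; rewrite ?sink_neq_start ?QM_sinkF //.
  by case: (q == x); [exact: presink_neq_start|exact: QM_neq hq QM_startF].
by move/eqP; rewrite eq_sym (negbTE presink_neq_sink).
Qed.

Lemma tr_cover_covers x : in_QM x -> covers_but x (tr_cover x).
Proof.
move=> hx; rewrite /covers_but mk_tr_start eqxx /=.
apply/subsetP=> y; rewrite in_setC3 => /and3P[ys yk yx].
case: (point_cases y) => [e|hy|->|e]; [by rewrite e eqxx in ys| | |by rewrite e eqxx in yk].
  by apply/imsetP; exists y; rewrite ?inE // mk_tr_QM // (negbTE yx).
by apply/imsetP; exists x; rewrite ?inE // mk_tr_QM // eqxx.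
Qed.

Lemma tr_presink_inj : injective tr_presink.
Proof.
move=> c c' e; apply/ffunP=> i; apply: oapp_mid_inj.
by rewrite -!tr_presink_mid e.
Qed.

Lemma tr_mid_inj p p' b b' : tr_mid p b = tr_mid p' b' -> p = p' /\ b = b'.
Proof.
move=> e; split.
  by apply: mid_inj; have := congr1 (fun t : transf n => t start) e; rewrite /= !mk_tr_start.
apply/ffunP=> i; have := congr1 (fun t : transf n => t (mid i)) e; rewrite /= !tr_mid_mid.
by case: (b i) (b' i) => [] [] // /eqP;
  rewrite ?(negbTE presink_neq_sink) // eq_sym (negbTE presink_neq_sink).
Qed.

Definition code := ({ffun 'I_m.+2 -> option 'I_m.+2} + 'I_m.+2 * {ffun 'I_m.+2 -> bool})%type.

Lemma card_code : #|{: code}| = m.+3 ^ m.+2 + m.+2 * 2 ^ m.+2.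
Proof. by rewrite card_sum card_prod !card_ffun card_option !card_ord card_bool. Qed.

Section Generators.

Variable G : {set transf n}.
Hypothesis G_gen : generates_W6bf G.

Lemma gen_sg_spec t : gen_sg G t -> W6bf_spec t.
Proof.
elim=> [{}t /(G_gen.1 t) /in_W6bfP //|s u _ hs _ hu]; exact: W6bf_spec_mul.
Qed.

Lemma W6bf_indecomposable t : W6bf_spec t -> t start != sink ->
  (exists2 q, in_QM q & t q != sink) -> t \in G.
Proof.
move=> /in_W6bfP /(G_gen.2 t); case=> [//|s u gs gu] h0 [q hq].
by rewrite (tmul_QM_sink (gen_sg_spec gs) (gen_sg_spec gu) h0 hq) eqxx.
Qed.

Lemma covers_but_gen x t : in_QM x -> gen_sg G t -> covers_but x t ->
  exists2 g, g \in G & covers_but x g.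
Proof.
move=> hx; elim=> [{}t tG|s u gs _ gu IHu] cov; first by exists t.
exact/IHu/(covers_but_mulr hx (gen_sg_spec gs) (gen_sg_spec gu)).
Qed.

Definition cover_gen x : transf n := odflt (tr_cover x) [pick g in G | covers_but x g].

Lemma cover_genP x : in_QM x -> cover_gen x \in G /\ covers_but x (cover_gen x).
Proof.
move=> hx; rewrite /cover_gen; case: pickP => [g /andP[] //|none].
have [g gG cov] := covers_but_gen hx (G_gen.2 _ (proj2 (in_W6bfP _) (tr_cover_spec x)))
  (tr_cover_covers hx).
by move: (none g); rewrite gG cov.
Qed.

Lemma cover_gen_inj x y : in_QM x -> in_QM y -> cover_gen x = cover_gen y -> x = y.
Proof.
move=> hx hy e; apply: (@covers_but_inj _ _ (cover_gen x)); first exact: (cover_genP hx).2.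
by rewrite e; exact: (cover_genP hy).2.
Qed.

(* For b = 0 the map tr_mid p b sends Q_M to n-1 and may be decomposable; the
   code then stands for a generator covering all but mid p instead. *)
Definition generator_of (d : code) : transf n :=
  match d with
  | inl c => tr_presink c
  | inr (p, b) => if b == [ffun=> false] then cover_gen (mid p) else tr_mid p b
  end.

Lemma generator_of_in d : generator_of d \in tr_presink [ffun=> None] |: G.
Proof.
case: d => [c|[p b]] /=.
  have [->|nc] := eqVneq c [ffun=> None]; first exact: setU11.
  rewrite setU1r //; apply: W6bf_indecomposable (tr_presink_spec c) _ _.
    by rewrite mk_tr_start presink_neq_sink.
  have [i ci] := ffun_neq_const nc; exists (mid i); first exact: QM_mid.
  by rewrite tr_presink_mid; case: (c i) ci => [k _|//]; exact: QM_neq (QM_mid k) QM_sinkF.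
have [_|nb] := eqVneq b [ffun=> false]; first by rewrite setU1r // (cover_genP (QM_mid p)).1.
rewrite setU1r //; apply: W6bf_indecomposable (tr_mid_spec p b) _ _.
  by rewrite mk_tr_start; exact: QM_neq (QM_mid p) QM_sinkF.
have [i bi] := ffun_neq_const nb; exists (mid i); first exact: QM_mid.
by rewrite tr_mid_mid; case: (b i) bi => // _; exact: presink_neq_sink.
Qed.

Lemma generator_of_start d : generator_of d start =
  if d is inr (p, b) then (if b == [ffun=> false] then sink else mid p) else presink.
Proof.
case: d => [c|[p b]] /=; first exact: mk_tr_start.
case: eqP => _; last exact: mk_tr_start.
by have [_ /andP[/eqP]] := cover_genP (QM_mid p).
Qed.

Lemma generator_of_inj : injective generator_of.
Proof.
have mid_neq i : mid i != presink /\ mid i != sink.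
  by split; apply: QM_neq (QM_mid i) _; rewrite ?QM_presinkF ?QM_sinkF.
move=> d d' e; have := congr1 (fun t : transf n => t start) e; rewrite /= !generator_of_start.
case: d d' e => [c|[p b]] [c'|[p' b']] /=.
- by move/tr_presink_inj->.
- case: eqP => _ _ /eqP; rewrite ?(negbTE presink_neq_sink) //.
  by rewrite eq_sym (negbTE (mid_neq p').1).
- by case: eqP => _ _ /eqP; rewrite ?(negbTE (mid_neq p).1) // eq_sym (negbTE presink_neq_sink).
- case: (eqVneq b [ffun=> false]) (eqVneq b' [ffun=> false]) => [->|nb] [->|nb'] //=.
  + by move/(cover_gen_inj (QM_mid p) (QM_mid p'))/mid_inj->.
  + by move=> _ /eqP; rewrite eq_sym (negbTE (mid_neq p').2).
  + by move=> _ /eqP; rewrite (negbTE (mid_neq p).2).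
  + by case/tr_mid_inj=> -> ->.
Qed.

Lemma card_generators : m.+3 ^ m.+2 + m.+2 * 2 ^ m.+2 <= #|G|.+1.
Proof.
have sub : generator_of @: setT \subset tr_presink [ffun=> None] |: G.
  by apply/subsetP=> _ /imsetP[d _ ->]; exact: generator_of_in.
rewrite -card_code -cardsT -(card_imset _ generator_of_inj).
apply: leq_trans (subset_leq_card sub) _.
by rewrite cardsU1; exact: leq_add (leq_b1 _) (leqnn _).
Qed.

End Generators.
End W6bf.

Theorem mainTheorem8 (n : nat) (G : {set transf n}) :
  5 <= n -> generates_W6bf G ->
  (n - 2) ^ (n - 3) + (n - 3) * 2 ^ (n - 3) - 1 <= #|G|.
Proof.
case: n G => [|[|[|[|[|m]]]]] // G _ hG.
by have := card_generators hG; rewrite !subSS !subn0; lia.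
Qed.
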